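(* Let $k$ be a field of characteristic $0$, $V$ a $k$-module, and $L=(\mathcal{L}ie(\mathcal{M}ag(V)),\circ,[\,,\,])$ the free PostLie algebra on $V$. The right $\mathcal U(L_{\{,\}})$-module $\mathcal{M}ag(V)$ is isomorphic to the free right $\mathcal U(L_{\{,\}})$-module generated by $V$: $$\mathcal{M}ag(V)\cong V\otimes\mathcal U(L_{\{,\}}).$$
   Context: A PostLie algebra is a $k$-module with operations $\circ$, $[\,,\,]$, $[\,,\,]$ a Lie bracket, satisfying $(x\circ y)\circ z-x\circ(y\circ z)-(x\circ z)\circ y+x\circ(z\circ y)=x\circ[y,z]$ and $[x,y]\circ z=[x\circ z,y]+[x,y\circ z]$. The free PostLie algebra on $V$ has underlying module $\mathcal{L}ie(\mathcal{M}ag(V))$, the free Lie algebra on the free magmatic algebra $\mathcal{M}ag(V)$, with $[\,,\,]$ the free Lie bracket; $\mathcal{M}ag(V)\subset L$ (weight-one part in the Lie direction) and on $\mathcal{M}ag(V)$ the operation $\circ$ is the free magmatic product. $L_{\{,\}}$ is the Lie algebra $(L,\{\,,\,\})$ with $\{x,y\}=x\circ y-y\circ x+[x,y]$; $L$ is a right $L_{\{,\}}$-module via $(x,y)\mapsto x\circ y$, extended to a right action $\star$ of the universal enveloping algebra $\mathcal U(L_{\{,\}})$ by $g\star(v_1\otimes\cdots\otimes v_n)=((g\circ v_1)\cdots)\circ v_n$. The submodule $\mathcal{M}ag(V)\subset L$ is stable under this action, hence is a right $\mathcal U(L_{\{,\}})$-module. *)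

From HB Require Import structures.
From mathcomp Require Import all_boot all_algebra.
Set Implicit Arguments. Unset Strict Implicit. Unset Printing Implicit Defensive.
Import GRing.Theory.
Local Open Scope ring_scope.

Definition is_klinear (k : fieldType) (X Y : lmodType k) (f : X -> Y) : Prop :=
  forall (a : k) (x y : X), f (a *: x + y) = a *: f x + f y.

Definition is_bilinear (k : fieldType) (X Y Z : lmodType k) (op : X -> Y -> Z)
  : Prop :=
  (forall y, is_klinear (fun x => op x y)) /\ (forall x, is_klinear (op x)).

Definition is_lie_bracket (k : fieldType) (L : lmodType k) (br : L -> L -> L)
  : Prop :=
  [/\ is_bilinear br, (forall x, br x x = 0) &
      (forall x y z, br x (br y z) + br y (br z x) + br z (br x y) = 0)].

Definition is_postLie (k : fieldType) (L : lmodType k) (circ br : L -> L -> L)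
  : Prop :=
  [/\ is_lie_bracket br, is_bilinear circ,
      (forall x y z, circ (circ x y) z - circ x (circ y z)
                      - circ (circ x z) y + circ x (circ z y) = circ x (br y z)) &
      (forall x y z, circ (br x y) z = br (circ x z) y + br x (circ y z))].

Definition is_postLie_hom (k : fieldType) (L P : lmodType k)
  (circL brL : L -> L -> L) (circP brP : P -> P -> P) (g : L -> P) : Prop :=
  [/\ is_klinear g, (forall x y, g (circL x y) = circP (g x) (g y)) &
      (forall x y, g (brL x y) = brP (g x) (g y))].

Definition is_free_postLie (k : fieldType) (V L : lmodType k)
  (circ br : L -> L -> L) (j : V -> L) : Prop :=
  [/\ is_postLie circ br, is_klinear j &
      forall (P : lmodType k) (circP brP : P -> P -> P), is_postLie circP brP ->
      forall f : V -> P, is_klinear f ->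
      exists g : L -> P,
        (is_postLie_hom circ br circP brP g /\ forall v, g (j v) = f v) /\
        (forall g' : L -> P, is_postLie_hom circ br circP brP g' ->
           (forall v, g' (j v) = f v) -> forall x, g' x = g x)].

(* The sub-k-module Mag(V) of L: the smallest subspace containing j(V) and
   closed under circ, i.e. the magmatic subalgebra generated by V. *)
Definition in_mag (k : fieldType) (V L : lmodType k) (circ : L -> L -> L)
  (j : V -> L) (x : L) : Prop :=
  forall S : L -> Prop, (forall v, S (j v)) -> S 0 ->
    (forall (a : k) y z, S y -> S z -> S (a *: y + z)) ->
    (forall y z, S y -> S z -> S (circ y z)) -> S x.

Definition curly (k : fieldType) (L : lmodType k) (circ br : L -> L -> L)
  (x y : L) : L := circ x y - circ y x + br x y.

Definition is_alg_hom (k : fieldType) (A B : algType k) (h : A -> B) : Prop :=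
  [/\ is_klinear h, h 1 = 1 & forall a b, h (a * b) = h a * h b].

Definition is_lie_to_alg (k : fieldType) (g : lmodType k) (brg : g -> g -> g)
  (A : algType k) (phi : g -> A) : Prop :=
  is_klinear phi /\ forall x y, phi (brg x y) = phi x * phi y - phi y * phi x.

Definition is_UEA (k : fieldType) (g : lmodType k) (brg : g -> g -> g)
  (A : algType k) (phi : g -> A) : Prop :=
  is_lie_to_alg brg phi /\
  forall (B : algType k) (psi : g -> B), is_lie_to_alg brg psi ->
    exists h : A -> B, (is_alg_hom h /\ forall x, h (phi x) = psi x) /\
      (forall h' : A -> B, is_alg_hom h' -> (forall x, h' (phi x) = psi x) ->
         forall a, h' a = h a).

Definition is_right_mod (k : fieldType) (A : algType k) (N : lmodType k)
  (act : N -> A -> N) : Prop :=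
  [/\ is_bilinear act, (forall n, act n 1 = n) &
      forall n a b, act (act n a) b = act n (a * b)].

(* The subspace M (a predicate on L), stable under the right A-action star,
   together with the generating map j : V -> M, is the free right A-module
   generated by V (i.e. M ~ V (x) A via v (x) a |-> j v * a). *)
Definition is_free_right_mod_on (k : fieldType) (A : algType k) (V L : lmodType k)
  (M : L -> Prop) (star : L -> A -> L) (j : V -> L) : Prop :=
  forall (N : lmodType k) (act : N -> A -> N), is_right_mod act ->
  forall f : V -> N, is_klinear f ->
  exists g : L -> N,
    ((forall (c : k) x y, M x -> M y -> g (c *: x + y) = c *: g x + g y) /\
     (forall x a, M x -> g (star x a) = act (g x) a) /\
     (forall v, g (j v) = f v)) /\
    (forall g' : L -> N,
       (forall (c : k) x y, M x -> M y -> g' (c *: x + y) = c *: g' x + g' y) ->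
       (forall x a, M x -> g' (star x a) = act (g' x) a) ->
       (forall v, g' (j v) = f v) ->
       forall x, M x -> g' x = g x).

(* Read as a right action of y on x, the composition x o y is a right
   representation of the Lie algebra L_{,}: the first PostLie axiom says exactly
   x o {y,z} = (x o y) o z - (x o z) o y.  It therefore extends to a right
   U(L_{,})-module structure on L with x * phi(y) = x o y.

   Mag(V) is stable under (_ o z) for every z.  This is clear for z in Mag(V), and
   the first axiom transfers it to [y,z] once it is known for y, z, y o z and z o y;
   the second axiom shows that (_ o z) does not increase bracket depth, so
   induction on that depth covers the Lie algebra generated by Mag(V), which is all
   of L by freeness.  As U is generated by phi(L), Mag(V) is a U-submodule.

   For a right U-module N and a linear f : V -> N, the product L x N with
   (x,n) o (y,m) = (x o y, n * phi(y)) and [(x,n),(y,m)] = ([x,y],0) is again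
   PostLie, so freeness gives a PostLie map L -> L x N over (j, f).  Its first
   component is the identity and its second one is the required U-linear map, which
   is unique on Mag(V) because Mag(V) is generated from j(V) by o. *)

From HB Require Import structures.
From mathcomp Require Import all_boot all_algebra.
From mathcomp Require Import boolp functions.
Set Implicit Arguments. Unset Strict Implicit. Unset Printing Implicit Defensive.
Import GRing.Theory.
Local Open Scope ring_scope.

Section KLinear.
Variables (k : fieldType) (X Y : lmodType k) (f : X -> Y).
Hypothesis f_lin : is_klinear f.

Lemma klinear0 : f 0 = 0.
Proof.
have := f_lin 1 0 0; rewrite scaler0 scale1r addr0 -[LHS]addr0.
by move/addrI.
Qed.

Lemma klinearD x y : f (x + y) = f x + f y.
Proof. by have := f_lin 1 x y; rewrite !scale1r. Qed.

Lemma klinearZ a x : f (a *: x) = a *: f x.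
Proof. by have := f_lin a x 0; rewrite !addr0 klinear0 addr0. Qed.

Lemma klinearN x : f (- x) = - f x.
Proof. by rewrite -scaleN1r klinearZ scaleN1r. Qed.

Lemma klinearB x y : f (x - y) = f x - f y.
Proof. by rewrite klinearD klinearN. Qed.

End KLinear.

Section Subspace.
Variables (k : fieldType) (M : lmodType k) (S : submodClosed M).

Record subspace := Subspace { subspace_val : M; _ : subspace_val \in S }.
HB.instance Definition _ := [isSub for subspace_val].
HB.instance Definition _ := [Choice of subspace by <:].
HB.instance Definition _ := [SubChoice_isSubLmodule of subspace by <:].

End Subspace.

Section Subalgebra.
Variables (k : fieldType) (U : algType k) (S : subalgClosed U).

Record subalgebra := Subalgebra { subalgebra_val : U; _ : subalgebra_val \in S }.
HB.instance Definition _ := [isSub for subalgebra_val].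
HB.instance Definition _ := [Choice of subalgebra by <:].
HB.instance Definition _ := [SubChoice_isSubAlgebra of subalgebra by <:].

End Subalgebra.

Section PropSubmodule.
Variables (k : fieldType) (M : lmodType k) (S : M -> Prop).
Hypotheses (S0 : S 0) (S_lin : forall c x y, S x -> S y -> S (c *: x + y)).

Fact prop_submod_closed : submod_closed (fun x => `[< S x >]).
Proof.
split; first exact/asboolP.
by move=> c x y /asboolP Sx /asboolP Sy; apply/asboolP; exact: S_lin.
Qed.

Definition prop_submod : submodClosed M := HB.pack (fun x => `[< S x >] : bool)
  (GRing.isSubmodClosed.Build k M _ (GRing.submod_closed_semi prop_submod_closed)).

Lemma prop_submodP x : reflect (S x) (x \in prop_submod).
Proof. exact: asboolP. Qed.

End PropSubmodule.
Arguments prop_submodP {k M S S0 S_lin x}.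

Section PropSubalgebra.
Variables (k : fieldType) (U : algType k) (S : U -> Prop).
Hypotheses (S1 : S 1) (S_lin : forall c a b, S a -> S b -> S (c *: a + b))
  (S_mul : forall a b, S a -> S b -> S (a * b)).

Fact prop_subalg_closed : subalg_closed (fun a => `[< S a >]).
Proof.
split; first exact/asboolP.
  by move=> c a b /asboolP Sa /asboolP Sb; apply/asboolP; exact: S_lin.
by move=> a b /asboolP Sa /asboolP Sb; apply/asboolP; exact: S_mul.
Qed.

Definition prop_subalg : subalgClosed U := HB.pack (fun a => `[< S a >] : bool)
  (GRing.isSubalgClosed.Build k U _ (GRing.subalg_closed_semi prop_subalg_closed)).

Lemma prop_subalgP a : reflect (S a) (a \in prop_subalg).
Proof. exact: asboolP. Qed.

End PropSubalgebra.
Arguments prop_subalgP {k U S S1 S_lin S_mul a}.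

Section ReversedEndomorphisms.
Variables (k : fieldType) (M : lmodType k).

Lemma klinear_zero : is_klinear (0 : M -> M).
Proof. by move=> a x y; rewrite scaler0 addr0. Qed.

Lemma klinear_lin_closed c (f g : M -> M) :
  is_klinear f -> is_klinear g -> is_klinear (c *: f + g).
Proof.
move=> f_lin g_lin a x y; rewrite !fctE.
by rewrite f_lin g_lin !scalerDr !scalerA [c * a]mulrC addrACA.
Qed.

Lemma klinear_id : is_klinear (@id M). Proof. by []. Qed.

Lemma klinear_comp (f g : M -> M) :
  is_klinear f -> is_klinear g -> is_klinear (g \o f).
Proof. by move=> f_lin g_lin a x y /=; rewrite f_lin g_lin. Qed.

Definition endo : lmodType k := subspace (prop_submod klinear_zero klinear_lin_closed).

Definition endo_apply (f : endo) : M -> M := subspace_val f.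

Lemma endo_applyP f : is_klinear (endo_apply f).
Proof. exact: elimT prop_submodP (valP f). Qed.

Lemma endo_ext f g : endo_apply f =1 endo_apply g -> f = g.
Proof. by move=> fg; apply: val_inj; apply: funext. Qed.

Definition endo_of (f : M -> M) (f_lin : is_klinear f) : endo :=
  Subspace (introT prop_submodP f_lin).

Definition endo_one : endo := endo_of klinear_id.

Definition endo_rev_mul (f g : endo) : endo :=
  endo_of (klinear_comp (endo_applyP f) (endo_applyP g)).

Lemma endo_rev_mulA : associative endo_rev_mul.
Proof. by move=> f g h; apply: endo_ext. Qed.

Lemma endo_rev_mul1l : left_id endo_one endo_rev_mul.
Proof. by move=> f; apply: endo_ext. Qed.

Lemma endo_rev_mul1r : right_id endo_one endo_rev_mul.
Proof. by move=> f; apply: endo_ext. Qed.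

Lemma endo_rev_mulDl : left_distributive endo_rev_mul +%R.
Proof.
by move=> f g h; apply: endo_ext => x /=; rewrite (klinearD (endo_applyP h)).
Qed.

Lemma endo_rev_mulDr : right_distributive endo_rev_mul +%R.
Proof. by move=> f g h; apply: endo_ext. Qed.

Lemma endo_rev_scaleAl a f g : a *: endo_rev_mul f g = endo_rev_mul (a *: f) g.
Proof. by apply: endo_ext => x /=; rewrite (klinearZ (endo_applyP g)). Qed.

Lemma endo_rev_scaleAr a f g : a *: endo_rev_mul f g = endo_rev_mul f (a *: g).
Proof. by apply: endo_ext. Qed.

Variables (m0 : M) (m0_neq0 : m0 != 0).

Lemma endo_one_neq0 : endo_one != 0.
Proof. by apply: contraNneq m0_neq0 => /(congr1 (endo_apply^~ m0)) /= ->. Qed.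

(* Indexed by a nonzero vector because MathComp algebras are nontrivial rings. *)
Definition rev_endo of m0 != 0 : Type := endo.

HB.instance Definition _ := GRing.Lmodule.on (rev_endo m0_neq0).
HB.instance Definition _ := GRing.Zmodule_isNzRing.Build (rev_endo m0_neq0)
  endo_rev_mulA endo_rev_mul1l endo_rev_mul1r endo_rev_mulDl endo_rev_mulDr
  endo_one_neq0.
HB.instance Definition _ := GRing.Lmodule_isLalgebra.Build k (rev_endo m0_neq0)
  endo_rev_scaleAl.
HB.instance Definition _ := GRing.Lalgebra_isAlgebra.Build k (rev_endo m0_neq0)
  endo_rev_scaleAr.

End ReversedEndomorphisms.

Section EnvelopingAlgebra.
Variables (k : fieldType) (g : lmodType k) (brg : g -> g -> g).
Variables (U : algType k) (phi : g -> U).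
Hypothesis HU : is_UEA brg phi.

Lemma is_alg_hom_id : is_alg_hom (@id U).
Proof. by []. Qed.

Lemma uea_ind (S : U -> Prop) :
  S 1 -> (forall c a b, S a -> S b -> S (c *: a + b)) ->
  (forall a b, S a -> S b -> S (a * b)) -> (forall x, S (phi x)) ->
  forall a, S a.
Proof.
move=> S1 S_lin S_mul S_phi a.
have [[phi_lin phi_lie] univ] := HU.
pose B := subalgebra (prop_subalg S1 S_lin S_mul).
pose psi x : B := Subalgebra (introT prop_subalgP (S_phi x)).
have psi_lie : is_lie_to_alg brg psi.
  by split=> [c x y | x y]; apply: val_inj; rewrite /= ?phi_lin ?phi_lie.
have [h [[[h_lin h1 hM] h_phi] _]] := univ B psi psi_lie.
have [h0 [_ h0_unique]] := univ U phi (conj phi_lin phi_lie).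
have val_h : is_alg_hom (fun a => val (h a)).
  by split=> [c x y | | x y]; rewrite ?h_lin ?h1 ?hM.
have h0_id b : b = h0 b := h0_unique id is_alg_hom_id (fun=> erefl) b.
have h0_h b : val (h b) = h0 b by apply: (h0_unique _ val_h) => x; rewrite h_phi.
rewrite (h0_id a) -h0_h.
exact: elimT prop_subalgP (valP (h a)).
Qed.

Lemma right_lie_action_extends (M : lmodType k) (rho : M -> g -> M) :
  is_bilinear rho ->
  (forall m y z, rho m (brg y z) = rho (rho m y) z - rho (rho m z) y) ->
  exists star : M -> U -> M,
    is_right_mod star /\ forall m y, star m (phi y) = rho m y.
Proof.
move=> [rho_l rho_r] rho_br.
have [[m0 m0_neq0] | M_triv] := pselect (exists m0 : M, m0 != 0); last first.
  have M0 (m : M) : m = 0.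
    by apply/eqP; apply: contra_notT M_triv => m_neq0; exists m.
  exists (fun _ _ => 0); split; last by move=> m y; rewrite (M0 (rho m y)).
  by split; [split=> ? ? ? ?; rewrite scaler0 addr0 | move=> m; rewrite (M0 m) |].
pose psi y : rev_endo m0_neq0 := endo_of (rho_l y).
have psi_lie : is_lie_to_alg brg psi.
  by split=> [c x y | x y]; apply: endo_ext => m /=; rewrite ?rho_r ?rho_br.
have [h [[[h_lin h1 hM] h_phi] _]] := proj2 HU _ psi psi_lie.
exists (fun m a => endo_apply (h a) m); split; last by move=> m y; rewrite h_phi.
split; first split.
- by move=> a; apply: endo_applyP.
- by move=> m c a b; rewrite h_lin.
- by move=> m; rewrite h1.
- by move=> m a b; rewrite hM.
Qed.

End EnvelopingAlgebra.

Section PostLie.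
Variables (k : fieldType) (L : lmodType k) (circ br : L -> L -> L).
Hypothesis HpL : is_postLie circ br.

Lemma postLie_circ_bilinear : is_bilinear circ.
Proof. by case: HpL. Qed.

Lemma circ_curly x y z :
  circ x (curly circ br y z) = circ (circ x y) z - circ (circ x z) y.
Proof.
have [_ [_ circ_r] circ_assoc _] := HpL.
rewrite /curly (klinearD (circ_r x)) (klinearB (circ_r x)) -circ_assoc.
by rewrite addrC addrAC addrA subrK addrAC subrK.
Qed.

Lemma is_postLie_hom_id : is_postLie_hom circ br circ br id.
Proof. by []. Qed.

End PostLie.

Section FreePostLie.
Variables (k : fieldType) (V L : lmodType k) (circ br : L -> L -> L) (j : V -> L).
Hypothesis HL : is_free_postLie circ br j.

Lemma free_postLie_hom_ext (g1 g2 : L -> L) :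
  is_postLie_hom circ br circ br g1 -> (forall v, g1 (j v) = j v) ->
  is_postLie_hom circ br circ br g2 -> (forall v, g2 (j v) = j v) -> g1 =1 g2.
Proof.
have [HpL j_lin univ] := HL.
move=> g1_hom g1_j g2_hom g2_j x.
have [g0 [_ g0_unique]] := univ _ _ _ HpL j j_lin.
by rewrite (g0_unique _ g1_hom g1_j) (g0_unique _ g2_hom g2_j).
Qed.

Lemma free_postLie_ind (S : L -> Prop) :
  (forall v, S (j v)) -> (forall c x y, S x -> S y -> S (c *: x + y)) ->
  (forall x y, S x -> S y -> S (circ x y)) ->
  (forall x y, S x -> S y -> S (br x y)) ->
  forall x, S x.
Proof.
move=> S_j S_lin S_circ S_br x.
have [HpL j_lin univ] := HL.
have S0 : S 0 by have := S_lin (-1) _ _ (S_j 0) (S_j 0); rewrite scaleN1r addNr.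
pose B := subspace (prop_submod S0 S_lin).
have BP (u : B) : S (val u) := elimT prop_submodP (valP u).
pose inB y (Sy : S y) : B := Subspace (introT prop_submodP Sy).
pose circB (u w : B) := inB _ (S_circ _ _ (BP u) (BP w)).
pose brB (u w : B) := inB _ (S_br _ _ (BP u) (BP w)).
have B_postLie : is_postLie circB brB.
  have [[[br_l br_r] br_alt br_jacobi] [circ_l circ_r] circ_assoc circ_br] := HpL.
  split; [split; [split|..]|split|..]
    => [y a u w|y a u w|u|u w z|y a u w|y a u w|u w z|u w z]; apply: val_inj.
  - exact: br_l.
  - exact: br_r.
  - exact: br_alt.
  - exact: br_jacobi.
  - exact: circ_l.
  - exact: circ_r.
  - exact: circ_assoc.
  - exact: circ_br.
have jB_lin : is_klinear (fun v => inB _ (S_j v)).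
  by move=> a v w; apply: val_inj; exact: j_lin.
have [h [[[h_lin h_circ h_br] h_j] _]] := univ _ _ _ B_postLie _ jB_lin.
have val_h_hom : is_postLie_hom circ br circ br (fun y => val (h y)).
  by split=> [a y z|y z|y z]; rewrite ?h_lin ?h_circ ?h_br.
have val_h_j v : val (h (j v)) = j v by rewrite h_j.
have <- : val (h x) = x.
  apply: (free_postLie_hom_ext val_h_hom val_h_j (is_postLie_hom_id circ br)).
  by [].
exact: BP.
Qed.

End FreePostLie.

Section MagmaticSubalgebra.
Variables (k : fieldType) (V L : lmodType k) (circ : L -> L -> L) (j : V -> L).
Local Notation mag := (in_mag circ j).

Lemma in_mag_j v : mag (j v).
Proof. by move=> S. Qed.

Lemma in_mag0 : mag 0.
Proof. by move=> S. Qed.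

Lemma in_mag_lin c x y : mag x -> mag y -> mag (c *: x + y).
Proof.
by move=> Hx Hy S Sj S0 S_lin S_circ; apply: (S_lin); [exact: Hx | exact: Hy].
Qed.

Lemma in_mag_circ x y : mag x -> mag y -> mag (circ x y).
Proof.
by move=> Hx Hy S Sj S0 S_lin S_circ; apply: (S_circ); [exact: Hx | exact: Hy].
Qed.

Lemma in_magD x y : mag x -> mag y -> mag (x + y).
Proof. by move=> Hx Hy; have := in_mag_lin 1 Hx Hy; rewrite scale1r. Qed.

Lemma in_magN x : mag x -> mag (- x).
Proof. by move=> Hx; have := in_mag_lin (-1) Hx in_mag0; rewrite scaleN1r addr0. Qed.

End MagmaticSubalgebra.
Arguments in_mag_j {k V L circ j} v.
Arguments in_mag0 {k V L circ j}.

Section MagmaticRightIdeal.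
Variables (k : fieldType) (V L : lmodType k) (circ br : L -> L -> L) (j : V -> L).
Hypothesis HL : is_free_postLie circ br j.
Local Notation mag := (in_mag circ j).

Let HpL : is_postLie circ br. Proof. by case: HL. Qed.

Inductive lie_of_mag : nat -> L -> Prop :=
  | LieOfMag n x of mag x : lie_of_mag n x
  | LieOfMagLin n c x y of lie_of_mag n x & lie_of_mag n y : lie_of_mag n (c *: x + y)
  | LieOfMagBr n x y of lie_of_mag n x & lie_of_mag n y : lie_of_mag n.+1 (br x y).

Lemma lie_of_mag_succ n x : lie_of_mag n x -> lie_of_mag n.+1 x.
Proof.
elim=> {n x} [n x Hx | n c x y _ IHx _ IHy | n x y _ IHx _ IHy].
- exact: LieOfMag.
- exact: LieOfMagLin.
- exact: LieOfMagBr.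
Qed.

Lemma lie_of_mag_mono m n x : (m <= n)%N -> lie_of_mag m x -> lie_of_mag n x.
Proof.
move=> /subnK <- Hx; elim: (n - m)%N => // d IHd.
by rewrite addSn; apply: lie_of_mag_succ.
Qed.

Definition circ_stable z := forall x, mag x -> mag (circ x z).

Lemma lie_of_mag_circ n w z :
  lie_of_mag n w -> circ_stable z -> lie_of_mag n (circ w z).
Proof.
have [_ [circ_l _] _ circ_br] := HpL.
move=> Hw z_stable.
elim: Hw => {n w} [n x Hx | n c x y _ IHx _ IHy | n x y Hx IHx Hy IHy].
- by apply: LieOfMag; apply: z_stable.
- by rewrite circ_l; apply: LieOfMagLin.
- rewrite circ_br -[br (circ x z) y]scale1r.
  by apply: LieOfMagLin; apply: LieOfMagBr.
Qed.

Lemma circ_stable_lin c y z :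
  circ_stable y -> circ_stable z -> circ_stable (c *: y + z).
Proof.
have [_ [_ circ_r] _ _] := HpL.
by move=> y_stable z_stable x Hx; rewrite circ_r; apply: in_mag_lin; auto.
Qed.

Lemma circ_stable_br y z :
  circ_stable y -> circ_stable z ->
  circ_stable (circ y z) -> circ_stable (circ z y) -> circ_stable (br y z).
Proof.
have [_ _ circ_assoc _] := HpL.
move=> y_stable z_stable yz_stable zy_stable x Hx; rewrite -circ_assoc.
apply: in_magD; [apply: in_magD; [apply: in_magD|]|].
- exact: z_stable (y_stable _ Hx).
- exact: in_magN (yz_stable _ Hx).
- exact: in_magN (y_stable _ (z_stable _ Hx)).
- exact: zy_stable _ Hx.
Qed.

Lemma circ_stable_lie n z : lie_of_mag n z -> circ_stable z.
Proof.
elim/ltn_ind: n z => n IHn z Hz.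
elim: Hz IHn => {n z} [n x Hx | n c x y _ IHx _ IHy | n x y Hx IHx Hy IHy] IHn.
- by move=> w Hw; apply: in_mag_circ.
- exact: circ_stable_lin (IHx IHn) (IHy IHn).
- have IHn' m : (m < n)%N -> forall w, lie_of_mag m w -> circ_stable w.
    by move=> lt_mn; apply: IHn; apply: ltnW.
  have x_stable := IHx IHn'; have y_stable := IHy IHn'.
  by apply: circ_stable_br => //; apply: (IHn n) => //; apply: lie_of_mag_circ.
Qed.

Lemma lie_of_mag_total x : exists n, lie_of_mag n x.
Proof.
move: x; apply: (free_postLie_ind HL).
- by move=> v; exists 0%N; apply: LieOfMag; apply: in_mag_j.
- move=> c y z [m Hy] [n Hz]; exists (maxn m n); apply: LieOfMagLin.
  + exact: lie_of_mag_mono (leq_maxl m n) Hy.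
  + exact: lie_of_mag_mono (leq_maxr m n) Hz.
- move=> y z [m Hy] [n Hz]; exists m.
  exact: lie_of_mag_circ Hy (circ_stable_lie Hz).
- move=> y z [m Hy] [n Hz]; exists (maxn m n).+1; apply: LieOfMagBr.
  + exact: lie_of_mag_mono (leq_maxl m n) Hy.
  + exact: lie_of_mag_mono (leq_maxr m n) Hz.
Qed.

Lemma in_mag_circr x z : mag x -> mag (circ x z).
Proof. by have [n Hz] := lie_of_mag_total z; apply: (circ_stable_lie Hz). Qed.

End MagmaticRightIdeal.

Section SemidirectPostLie.
Variables (k : fieldType) (L : lmodType k) (circ br : L -> L -> L).
Hypothesis HpL : is_postLie circ br.
Variables (U : algType k) (phi : L -> U).
Hypothesis phi_lie : is_lie_to_alg (curly circ br) phi.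
Variables (N : lmodType k) (act : N -> U -> N).
Hypothesis act_mod : is_right_mod act.

Definition semidirect_circ (p q : L * N) : L * N :=
  (circ p.1 q.1, act p.2 (phi q.1)).
Definition semidirect_br (p q : L * N) : L * N := (br p.1 q.1, 0).

Lemma lie_to_alg_br y z :
  phi (br y z) = phi y * phi z - phi z * phi y - phi (circ y z) + phi (circ z y).
Proof.
have [phi_lin phi_curly] := phi_lie.
rewrite -phi_curly /curly (klinearD phi_lin) (klinearB phi_lin).
by rewrite [_ - _ + _ - _]addrAC [_ - _ - _]addrAC subrr add0r addrAC addNr add0r.
Qed.

Lemma postLie_semidirect : is_postLie semidirect_circ semidirect_br.
Proof.
have [[[br_l br_r] br_alt br_jacobi] [circ_l circ_r] circ_assoc circ_br] := HpL.
have [[act_l act_r] _ act_mul] := act_mod.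
have [phi_lin _] := phi_lie.
split; [split; [split|..]|split|..].
- by move=> q a p1 p2; congr (_, _) => /=; [apply: br_l | rewrite scaler0 addr0].
- by move=> p a q1 q2; congr (_, _) => /=; [apply: br_r | rewrite scaler0 addr0].
- by move=> p; congr (_, _) => /=; apply: br_alt.
- by move=> p q r; congr (_, _) => /=; [apply: br_jacobi | rewrite !addr0].
- by move=> q a p1 p2; congr (_, _) => /=; [apply: circ_l | apply: act_l].
- move=> p a q1 q2; congr (_, _) => /=; first exact: circ_r.
  by rewrite phi_lin act_r.
- move=> [x n] [y m] [z l]; congr (_, _) => /=; first exact: circ_assoc.
  rewrite lie_to_alg_br !act_mul -!(klinearB (act_r n)) -(klinearD (act_r n)).
  by rewrite [_ - _ - phi (circ y z)]addrAC.
- move=> p q r; congr (_, _) => /=; first exact: circ_br.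
  by rewrite (klinear0 (act_l _)) addr0.
Qed.

End SemidirectPostLie.

Section FreeRightModule.
Variables (k : fieldType) (V L : lmodType k) (circ br : L -> L -> L) (j : V -> L).
Hypothesis HL : is_free_postLie circ br j.
Variables (U : algType k) (phi : L -> U).
Hypothesis HU : is_UEA (curly circ br) phi.
Variable star : L -> U -> L.
Hypotheses (star_mod : is_right_mod star)
  (star_phi : forall x y, star x (phi y) = circ x y).
Local Notation mag := (in_mag circ j).

Lemma in_mag_star x a : mag x -> mag (star x a).
Proof.
have [[_ star_r] star1 star_mul] := star_mod.
move: a x; apply: (uea_ind HU).
- by move=> x Hx; rewrite star1.
- by move=> c a b Ha Hb x Hx; rewrite star_r; apply: in_mag_lin; auto.
- by move=> a b Ha Hb x Hx; rewrite -star_mul; auto.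
- by move=> y x Hx; rewrite star_phi; apply: (in_mag_circr HL).
Qed.

Section Intertwiners.
Variables (N : lmodType k) (act : N -> U -> N).
Hypothesis act_mod : is_right_mod act.

Lemma free_postLie_intertwiner f : is_klinear f ->
  exists g : L -> N, [/\ is_klinear g, forall v, g (j v) = f v &
                         forall x y, g (circ x y) = act (g x) (phi y)].
Proof.
have [HpL j_lin univ] := HL.
move=> f_lin.
have jf_lin : is_klinear (fun v => (j v, f v) : L * N).
  by move=> a v w; congr (_, _); [apply: j_lin | apply: f_lin].
have [G [[[G_lin G_circ G_br] G_j] _]] :=
  univ _ _ _ (postLie_semidirect HpL (proj1 HU) act_mod) _ jf_lin.
have G1 x : (G x).1 = x.
  have G1_hom : is_postLie_hom circ br circ br (fun x => (G x).1).
    by split=> [a y z|y z|y z]; rewrite ?G_lin ?G_circ ?G_br.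
  apply: (free_postLie_hom_ext HL G1_hom _ (is_postLie_hom_id circ br) (fun=> erefl)).
  by move=> v; rewrite G_j.
exists (fun x => (G x).2); split.
- by move=> a y z; rewrite G_lin.
- by move=> v; rewrite G_j.
- by move=> x y; rewrite G_circ /= G1.
Qed.

Lemma intertwiner_star (g : L -> N) :
  is_klinear g -> (forall x y, g (circ x y) = act (g x) (phi y)) ->
  forall x a, g (star x a) = act (g x) a.
Proof.
have [[_ star_r] star1 star_mul] := star_mod.
have [[_ act_r] act1 act_mul] := act_mod.
move=> g_lin g_circ x a; move: a x; apply: (uea_ind HU).
- by move=> x; rewrite star1 act1.
- by move=> c a b Ha Hb x; rewrite star_r g_lin Ha Hb act_r.
- by move=> a b Ha Hb x; rewrite -star_mul -act_mul Hb Ha.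
- by move=> y x; rewrite star_phi g_circ.
Qed.

Lemma mag_intertwiner_ext (g1 g2 : L -> N) :
  (forall c x y, mag x -> mag y -> g1 (c *: x + y) = c *: g1 x + g1 y) ->
  (forall c x y, mag x -> mag y -> g2 (c *: x + y) = c *: g2 x + g2 y) ->
  (forall x a, mag x -> g1 (star x a) = act (g1 x) a) ->
  (forall x a, mag x -> g2 (star x a) = act (g2 x) a) ->
  (forall v, g1 (j v) = g2 (j v)) ->
  forall x, mag x -> g1 x = g2 x.
Proof.
move=> g1_lin g2_lin g1_star g2_star g12_j x Hx.
have mag_lin0 (g : L -> N) :
    (forall c x y, mag x -> mag y -> g (c *: x + y) = c *: g x + g y) -> g 0 = 0.
  move=> g_lin; have := g_lin 1 0 0 in_mag0 in_mag0.
  by rewrite scaler0 scale1r addr0 -[LHS]addr0 => /addrI.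
suff [] : mag x /\ g1 x = g2 x by [].
apply: (Hx (fun x => mag x /\ g1 x = g2 x)).
- by move=> v; split; [apply: in_mag_j | apply: g12_j].
- by split; [apply: in_mag0 | rewrite (mag_lin0 _ g1_lin) (mag_lin0 _ g2_lin)].
- move=> c y z [Hy e_y] [Hz e_z]; split; first exact: in_mag_lin.
  by rewrite g1_lin // g2_lin // e_y e_z.
- move=> y z [Hy e_y] [Hz e_z]; split; first exact: in_mag_circ.
  by rewrite -star_phi g1_star // g2_star // e_y.
Qed.

End Intertwiners.

Lemma free_right_mod_mag : is_free_right_mod_on mag star j.
Proof.
move=> N act act_mod f f_lin.
have [g [g_lin g_j g_circ]] := free_postLie_intertwiner act_mod f_lin.
have g_lin_mag c x y : mag x -> mag y -> g (c *: x + y) = c *: g x + g y.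
  by move=> _ _; apply: g_lin.
have g_star_mag x a : mag x -> g (star x a) = act (g x) a.
  by move=> _; apply: (intertwiner_star act_mod g_lin g_circ).
exists g; split=> // g' g'_lin g'_star g'_j.
apply: (mag_intertwiner_ext g'_lin g_lin_mag g'_star g_star_mag) => v.
by rewrite g'_j g_j.
Qed.

End FreeRightModule.

Theorem mainTheorem17 (k : fieldType) (Hchar : [pchar k] =i pred0)
  (V L : lmodType k) (circ br : L -> L -> L) (j : V -> L)
  (HL : is_free_postLie circ br j)
  (U : algType k) (phi : L -> U) (HU : is_UEA (curly circ br) phi) :
  exists star : L -> U -> L,
    [/\ is_right_mod star,
        (forall x y, star x (phi y) = circ x y),
        (forall x a, in_mag circ j x -> in_mag circ j (star x a)) &
        is_free_right_mod_on (in_mag circ j) star j].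
Proof.
have [HpL _ _] := HL.
have [star [star_mod star_phi]] :=
  right_lie_action_extends HU (postLie_circ_bilinear HpL) (circ_curly HpL).
exists star; split=> //.
- by move=> x a; apply: (in_mag_star HL HU star_mod star_phi).
- exact: (free_right_mod_mag HL HU star_mod star_phi).
Qed.
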